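(* Let $X$ be a Baire topological space, $Y$ a metric space and $\mathcal F\subseteq Y^X$. (1) If $\mathcal F$ is equi-cliquish, then $EC(\mathcal F)$ is a dense $G_\delta$ subset of $X$; in particular this holds if $\mathcal F$ is equi-GLP. (2) If $X$ is a metric space and $\mathcal F$ is equi-Baire 1, then $EC(\mathcal F)$ is a dense $G_\delta$ subset of $X$.
   Context: $EC(\mathcal F)$ denotes the set of points $x\in X$ at which $\mathcal F$ is equicontinuous: for every $\varepsilon>0$ there is a neighborhood $U$ of $x$ with $d(f(x'),f(x))<\varepsilon$ for all $x'\in U$, $f\in\mathcal F$. A space is Baire if every nonempty open subset is nonmeager. A family of subsets of $X$ is discrete if each point has a neighborhood meeting at most one member; $\sigma$-discrete if it is a countable union of discrete families. $\mathcal F\subseteq Y^X$ (with $(Y,d)$ metric) is equi-GLP if for every $\varepsilon>0$ there is a $\sigma$-discrete family $\mathcal A_\varepsilon$ of closed subsets of $X$ with $X=\bigcup\mathcal A_\varepsilon$ and $\operatorname{diam}f(A)\le\varepsilon$ for all $A\in\mathcal A_\varepsilon$ and all $f\in\mathcal F$; equi-cliquish if for every $\varepsilon>0$ and every nonempty open $U\subseteq X$ there is a nonempty open $O\subseteq U$ with $\operatorname{diam}f(O)<\varepsilon$ for all $f\in\mathcal F$; for $X$ metric with metric $\rho$, equi-Baire 1 if for every $\varepsilon>0$ there is $\delta_\varepsilon\colon X\to(0,\infty)$ such that for all $x,y\in X$ and $f\in\mathcal F$, $\rho(x,y)<\min\{\delta_\varepsilon(x),\delta_\varepsilon(y)\}$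 implies $d(f(x),f(y))<\varepsilon$. *)

From HB Require Import structures.
From mathcomp Require Import all_boot all_order all_algebra.
From mathcomp Require Import all_classical all_reals.
From mathcomp Require Import topology ereal normedtype borel_hierarchy.
Set Implicit Arguments. Unset Strict Implicit. Unset Printing Implicit Defensive.
Import Order.TTheory GRing.Theory Num.Theory.
Local Open Scope classical_set_scope.
Local Open Scope ring_scope.

Definition is_metric (R : realType) (Y : Type) (d : Y -> Y -> R) : Prop :=
  [/\ forall x y, 0 <= d x y,
      forall x y, d x y = 0 <-> x = y,
      forall x y, d x y = d y x &
      forall x y z, d x z <= d x y + d y z].

Definition metric_induces_topology (R : realType) (X : topologicalType)
  (rho : X -> X -> R) : Prop :=
  forall A : set X, open A <->
    (forall x, A x -> exists2 e : R, 0 < e & [set y | rho x y < e] `<=` A).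

(* diameter (in the extended reals; diam of the empty set is -oo) *)
Definition diam (R : realType) (Y : Type) (d : Y -> Y -> R) (S : set Y) : \bar R :=
  ereal_sup [set (d a b)%:E | a in S & b in S].

Definition nowhere_dense (T : topologicalType) (A : set T) : Prop :=
  interior (closure A) = set0.

Definition meager (T : topologicalType) (A : set T) : Prop :=
  exists2 F : nat -> set T, (forall n, nowhere_dense (F n)) & A `<=` \bigcup_n F n.

Definition baire_space (T : topologicalType) : Prop :=
  forall U : set T, open U -> U !=set0 -> ~ meager U.

Definition EC (R : realType) (X : topologicalType) (Y : Type) (d : Y -> Y -> R)
  (F : set (X -> Y)) : set X :=
  [set x | forall e : R, 0 < e -> exists2 U : set X, nbhs x U &
     forall x' f, U x' -> F f -> d (f x') (f x) < e].

Definition discrete_family (X : topologicalType) (A : set (set X)) : Prop :=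
  forall x : X, exists2 U : set X, nbhs x U &
    forall B C, A B -> A C -> B `&` U !=set0 -> C `&` U !=set0 -> B = C.

Definition sigma_discrete (X : topologicalType) (A : set (set X)) : Prop :=
  exists2 G : nat -> set (set X), (forall n, discrete_family (G n)) &
    A = \bigcup_n G n.

Definition equi_GLP (R : realType) (X : topologicalType) (Y : Type)
  (d : Y -> Y -> R) (F : set (X -> Y)) : Prop :=
  forall e : R, 0 < e -> exists A : set (set X),
    [/\ sigma_discrete A, (forall B, A B -> closed B),
        setT = \bigcup_(B in A) B &
        forall B f, A B -> F f -> (diam d (f @` B) <= e%:E)%E].

Definition equi_cliquish (R : realType) (X : topologicalType) (Y : Type)
  (d : Y -> Y -> R) (F : set (X -> Y)) : Prop :=
  forall (e : R) (U : set X), 0 < e -> open U -> U !=set0 ->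
    exists O : set X, [/\ open O, O !=set0, O `<=` U &
      forall f, F f -> (diam d (f @` O) < e%:E)%E].

Definition equi_Baire1 (R : realType) (X : Type) (Y : Type)
  (rho : X -> X -> R) (d : Y -> Y -> R) (F : set (X -> Y)) : Prop :=
  forall e : R, 0 < e -> exists2 delta : X -> R, (forall x, 0 < delta x) &
    forall x y f, F f -> rho x y < Num.min (delta x) (delta y) -> d (f x) (f y) < e.

From HB Require Import structures.
From mathcomp Require Import all_boot all_order all_algebra.
From mathcomp Require Import all_classical all_reals.
From mathcomp Require Import topology ereal normedtype borel_hierarchy.
From mathcomp Require Import lra.
Import Order.TTheory GRing.Theory Num.Theory.
Local Open Scope classical_set_scope.
Local Open Scope ring_scope.

(* For r > 0 let G_r be the (open) set of points having a neighbourhood on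
   which every f in F oscillates by less than r. Since d is a metric,
   EC(F) is the intersection of the G_(1/(n+1)), hence a G_delta.
   Equi-cliquishness says exactly that every G_r is dense, so in a Baire
   space their intersection is dense. Both equi-GLP and equi-Baire 1 imply
   equi-cliquishness through the Baire category theorem: a nonempty open
   set covered by countably many sets is somewhere dense in one of them;
   for a sigma-discrete closed cover this yields an open set inside a
   single member of the cover, and for the sets {x | 1/(n+1) < delta x}
   it yields a small ball on which delta is uniformly bounded below. *)

Lemma exists_natSinv_lt {R : realType} {e : R} :
  0 < e -> exists n : nat, n.+1%:R^-1 < e.
Proof. by move=> /ltr_add_invr [k]; rewrite add0r => h; exists k. Qed.

Section Diameter.
Context {R : realType} {Y : Type} {d : Y -> Y -> R}.

Lemma diam_ge (S : set Y) a b : S a -> S b -> ((d a b)%:E <= diam d S)%E.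
Proof. by move=> Sa Sb; apply: ereal_sup_ubound; exists a => //; exists b. Qed.

Lemma diam_le (S : set Y) (r : R) :
  (forall a b, S a -> S b -> d a b <= r) -> (diam d S <= r%:E)%E.
Proof. by move=> Sr; apply: ge_ereal_sup => _ [a Sa [b Sb <-]]; rewrite lee_fin Sr. Qed.

Lemma diam_subset {S T : set Y} : S `<=` T -> (diam d S <= diam d T)%E.
Proof.
by move=> ST; apply: ereal_sup_le => _ [a /ST Ta [b /ST Tb <-]]; exists a => //; exists b.
Qed.

End Diameter.

Lemma open_dense_nowhere_denseC (X : topologicalType) (G : set X) :
  open G -> dense G -> nowhere_dense (~` G).
Proof.
move=> oG dG; rewrite /nowhere_dense -(closure_id _).1; last by rewrite closedC.
apply/seteqP; split => // p Ip.
have [q [/interior_subset nGq Gq]] := dG _ (ex_intro _ p Ip) (@open_interior _ _).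
exact: nGq.
Qed.

Section BaireSpace.
Context {X : topologicalType}.
Hypothesis baireX : baire_space X.

Lemma baire_bigcap_dense (G : nat -> set X) :
  (forall n, open (G n)) -> (forall n, dense (G n)) -> dense (\bigcap_n G n).
Proof.
move=> oG dG W W0 oW; apply: contrapT => /set0P/negP/negbNE/eqP WG0.
apply: (baireX W oW W0); exists (fun n => ~` G n).
  by move=> n; apply: open_dense_nowhere_denseC.
move=> x Wx; have /existsNP [n nGx] : ~ (\bigcap_n G n) x.
  by move=> Gx; have : (W `&` \bigcap_n G n) x by []; rewrite WG0.
by exists n => // Gx; apply: nGx.
Qed.

Lemma baire_somewhere_dense {W : set X} {A : nat -> set X} :
  open W -> W !=set0 -> W `<=` \bigcup_n A n ->
  exists n, exists V : set X,
    [/\ open V, V !=set0, V `<=` W & V `<=` closure (A n)].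
Proof.
move=> oW W0 WA; apply: contrapT => nowhere.
apply: (baireX W oW W0); exists (fun n => A n `&` W); last first.
  by move=> x Wx; have [n _ Anx] := WA x Wx; exists n.
move=> n; apply/seteqP; split => // p Ip; apply: nowhere; exists n.
have [q [[Aq Wq] Iq]] := interior_subset Ip _ (nbhs_interior Ip).
exists ((closure (A n `&` W))° `&` W); split.
- exact: openI (@open_interior _ _) oW.
- by exists q.
- by move=> y [].
- by move=> y [/interior_subset Cy _]; apply: closureS Cy; apply: subIsetl.
Qed.

End BaireSpace.

(* Near a point of V all members of the family meeting V coincide; an open
   subset of V missing the member B would still meet the union, hence some
   member, which then must be B. *)
Lemma discrete_closed_family_interior {X : topologicalType} {G : set (set X)}
    {V : set X} :
  discrete_family G -> (forall B, G B -> closed B) ->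
  open V -> V !=set0 -> V `<=` closure (\bigcup_(B in G) B) ->
  exists2 B, G B & exists O : set X, [/\ open O, O !=set0 & O `<=` V `&` B].
Proof.
move=> discG clG oV [p Vp] VG.
have [U Up uniqU] := discG p.
pose O := U° `&` V.
have oO : open O by apply: openI => //; apply: open_interior.
have [q [[B GB Bq] [IUq Vq]]] := VG p Vp O (open_nbhs_nbhs (conj oO (conj Up Vp))).
have BU : B `&` U !=set0 by exists q; split => //; apply: interior_subset.
exists B => //; exists O; split => //; first by exists q.
move=> y [IUy Vy]; split => //; apply: contrapT => nBy.
have oOB : open (O `&` ~` B) by apply: openI => //; apply: closed_openC; apply: clG.
have [r [[C GC Cr] [[IUr _] nBr]]] :=
  VG y Vy _ (open_nbhs_nbhs (conj oOB (conj (conj IUy Vy) nBy))).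
have CU : C `&` U !=set0 by exists r; split => //; apply: interior_subset.
by apply: nBr; rewrite (uniqU B C GB GC BU CU).
Qed.

Section MetricTopology.
Context {R : realType} {X : topologicalType} {rho : X -> X -> R}.
Hypotheses (rho_metric : is_metric rho) (rho_top : metric_induces_topology rho).

Lemma open_metric_ball (p : X) (r : R) : open [set y | rho p y < r].
Proof.
have [_ _ _ rhoT] := rho_metric.
apply/rho_top => x px; exists (r - rho p x); first by rewrite subr_gt0.
by move=> y /= xy; apply: le_lt_trans (rhoT p x y) _; rewrite -ltrBrDl.
Qed.

Lemma metric_ball_half_lt (p u v : X) (r : R) :
  rho p u < r / 2 -> rho p v < r / 2 -> rho u v < r.
Proof.
have [_ _ rhoC rhoT] := rho_metric.
move=> pu pv; apply: le_lt_trans (rhoT u p v) _.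
by rewrite (rhoC u p) [ltRHS](splitr r) ltrD.
Qed.

Lemma metric_closure_approx (O A : set X) (x : X) (e : R) :
  open O -> O `<=` closure A -> O x -> 0 < e ->
  exists a, [/\ A a, O a & rho x a < e].
Proof.
have [_ rhoE _ _] := rho_metric.
move=> oO OA Ox e0.
have Bx : [set y | rho x y < e] x by rewrite /= (rhoE x x).2.
have oOB := openI oO (open_metric_ball x e).
by have [a [Aa [Oa xa]]] := OA x Ox _ (open_nbhs_nbhs (conj oOB (conj Ox Bx))); exists a.
Qed.

End MetricTopology.

Section Equicontinuity.
Context {R : realType} {X : topologicalType} {Y : Type}.
Context {d : Y -> Y -> R} {F : set (X -> Y)}.

Definition equi_osc_lt (r : R) : set X :=
  [set x | exists U : set X, [/\ open U, U x &
    forall f a b, F f -> U a -> U b -> d (f a) (f b) < r]].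

Lemma open_equi_osc_lt (r : R) : open (equi_osc_lt r).
Proof.
rewrite openE => x [U [oU Ux Ur]]; apply: (@filterS _ _ _ U).
  by move=> y Uy; exists U.
exact: open_nbhs_nbhs.
Qed.

Lemma EC_bigcap_equi_osc_lt :
  is_metric d -> EC d F = \bigcap_n equi_osc_lt n.+1%:R^-1.
Proof.
move=> [_ _ dC dT]; apply/seteqP; split.
  move=> x ECx n _.
  have [U] := ECx (n.+1%:R^-1 / 2) ltac:(by rewrite divr_gt0).
  rewrite nbhsE => -[B [oB Bx] BU] Usmall.
  exists B; split => // f a b Ff Ba Bb.
  apply: le_lt_trans (dT _ (f x) _) _.
  rewrite (dC (f x)) [ltRHS](splitr n.+1%:R^-1).
  by rewrite ltrD // Usmall //; apply: BU.
move=> x oscx e e0; have [n ne] := exists_natSinv_lt e0.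
have [U [oU Ux Usmall]] := oscx n I.
exists U; first exact: open_nbhs_nbhs.
by move=> x' f Ux' Ff; apply: lt_trans ne; apply: Usmall.
Qed.

Lemma Gdelta_EC : is_metric d -> Gdelta (EC d F).
Proof.
by move=> dm; exists (fun n => equi_osc_lt n.+1%:R^-1);
  [move=> n; apply: open_equi_osc_lt | apply: EC_bigcap_equi_osc_lt].
Qed.

Lemma equi_cliquish_dense_osc (r : R) :
  equi_cliquish d F -> 0 < r -> dense (equi_osc_lt r).
Proof.
move=> cliq r0 W W0 oW; have [O [oO [x Ox] OW Osmall]] := cliq r W r0 oW W0.
exists x; split; first exact: OW.
exists O; split => // f a b Ff Oa Ob; rewrite -lte_fin.
by apply: le_lt_trans (Osmall f Ff); apply: diam_ge; [exists a|exists b].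
Qed.

Lemma equi_cliquish_dense_EC :
  is_metric d -> baire_space X -> equi_cliquish d F -> dense (EC d F).
Proof.
move=> dm baireX cliq; rewrite EC_bigcap_equi_osc_lt //.
apply: baire_bigcap_dense => // n; first exact: open_equi_osc_lt.
exact: equi_cliquish_dense_osc.
Qed.

Lemma equi_GLP_cliquish : baire_space X -> equi_GLP d F -> equi_cliquish d F.
Proof.
move=> baireX GLP e W e0 oW W0.
have [A [[G discG ->] clA cover Asmall]] := GLP (e / 2) ltac:(by rewrite divr_gt0).
have GA n B : G n B -> (\bigcup_n G n) B by exists n.
have WG : W `<=` \bigcup_n \bigcup_(B in G n) B.
  move=> x _; have [B [n _ GB] Bx] : (\bigcup_(B in \bigcup_n G n) B) x.
    by rewrite -cover.
  by exists n => //; exists B.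
have [n [V [oV V0 VW VG]]] := baire_somewhere_dense baireX oW W0 WG.
have [B GB [O [oO O0 OVB]]] :=
  discrete_closed_family_interior (discG n) (fun B GB => clA B (GA n B GB)) oV V0 VG.
exists O; split => //; first by move=> y /OVB [/VW].
have OB : O `<=` B by move=> y /OVB [].
move=> f Ff; apply: le_lt_trans (diam_subset (image_subset f OB)) _.
by apply: le_lt_trans (Asmall B f (GA n B GB) Ff) _; rewrite lte_fin; lra.
Qed.

(* With delta chosen for e/6, one passes from x to y through points a, b of
   a ball of radius < 1/(2(n+1)) where delta exceeds 1/(n+1), in three
   steps of size < e/6. *)
Lemma equi_Baire1_cliquish {rho : X -> X -> R} :
  is_metric d -> baire_space X -> is_metric rho -> metric_induces_topology rho ->
  equi_Baire1 rho d F -> equi_cliquish d F.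
Proof.
move=> [_ _ _ dT] baireX rhom rhot Baire1 e W e0 oW W0.
have [_ rhoE rhoC _] := rhom.
have [delta delta0 close] := Baire1 (e / 6) ltac:(by rewrite divr_gt0).
pose A n := [set x : X | n.+1%:R^-1 < delta x].
have WA : W `<=` \bigcup_n A n.
  by move=> x _; have [n ?] := exists_natSinv_lt (delta0 x); exists n.
have [n [V [oV [p Vp] VW VA]]] := baire_somewhere_dense baireX oW W0 WA.
have [r r0 rV] := (rhot V).1 oV p Vp.
pose s := Num.min r (n.+1%:R^-1 / 2).
pose O := [set y | rho p y < s].
have oO : open O := open_metric_ball rhom rhot p s.
have OV : O `<=` V by move=> y Oy; apply: rV; apply: lt_le_trans Oy _; rewrite ge_min lexx.
have O_close u v : O u -> O v -> rho u v < n.+1%:R^-1.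
  by move=> Ou Ov; apply: (metric_ball_half_lt rhom p);
    [apply: lt_le_trans Ou _|apply: lt_le_trans Ov _]; rewrite ge_min lexx orbT.
have OA : O `<=` closure (A n) by move=> y /OV /VA.
have approx x : O x -> exists a, [/\ A n a, O a & rho x a < delta x].
  by move=> Ox; apply: (metric_closure_approx rhom rhot) => //; apply: delta0.
exists O; split => //.
- by exists p; rewrite /O /= (rhoE p p).2 // lt_min r0 divr_gt0.
- by move=> y /OV /VW.
move=> f Ff; apply: le_lt_trans (diam_le _ (e / 2) _) _; last by rewrite lte_fin; lra.
move=> _ _ [x Ox <-] [y Oy <-].
have [a [Aa Oa xa]] := approx x Ox; have [b [Ab Ob yb]] := approx y Oy.
have near_An u v : O u -> O v -> A n v -> rho u v < delta v.
  by move=> Ou Ov Av; apply: lt_trans Av; apply: O_close.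
have fxa : d (f x) (f a) < e / 6 by apply: close; rewrite // lt_min xa near_An.
have fab : d (f a) (f b) < e / 6.
  apply: close; rewrite // lt_min; apply/andP; split; last exact: near_An.
  by rewrite rhoC; apply: near_An.
have fby : d (f b) (f y) < e / 6.
  by apply: close; rewrite // lt_min rhoC yb andbT near_An.
apply: le_trans (dT _ (f a) _) _; apply: le_trans (lerD (lexx _) (dT _ (f b) _)) _.
lra.
Qed.

End Equicontinuity.

Theorem proposition3p7 (R : realType) (X : topologicalType) (Y : Type)
  (d : Y -> Y -> R) (F : set (X -> Y)) :
  is_metric d -> baire_space X ->
  [/\ (equi_cliquish d F -> Gdelta (EC d F) /\ dense (EC d F)),
      (equi_GLP d F -> Gdelta (EC d F) /\ dense (EC d F)) &
      (forall rho : X -> X -> R, is_metric rho -> metric_induces_topology rho ->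
         equi_Baire1 rho d F -> Gdelta (EC d F) /\ dense (EC d F))].
Proof.
move=> dm baireX.
have cliquish_EC : equi_cliquish d F -> Gdelta (EC d F) /\ dense (EC d F).
  by move=> cliq; split; [apply: Gdelta_EC | apply: equi_cliquish_dense_EC].
split => [//|GLP|rho rhom rhot Baire1]; apply: cliquish_EC.
- exact: equi_GLP_cliquish.
- exact: (equi_Baire1_cliquish dm baireX rhom rhot).
Qed.
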